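(* Let $n\ge1$ and $T\in I^\ell(n)$. Then: - the socle of $T$ is isomorphic to $S_1$; - the cosocle (top) of $T$ is isomorphic to $S_0$; - let $W\subseteq T$ be the socle; the module $\ker\big(T/W\to S_0\big)$ (kernel of the map induced by the projection to the cosocle) is isomorphic to a point of $I^r(n-1)$.
   Context: **The preprojective algebra.** $\Pi$ is the completed preprojective algebra of the quiver with vertices $0,1$ and arrows $\alpha,\beta:0\to1$, $\alpha^*,\beta^*:1\to0$. It is the path algebra, completed with respect to the ideal generated by the arrows, modulo the relations $\alpha\alpha^*+\beta\beta^*=0$ and $\alpha^*\alpha+\beta^*\beta=0$. A finite-dimensional $\Pi$-module is a graded space $V=V_0\oplus V_1$ with linear maps $t_\alpha,t_\beta:V_0\to V_1$ and $t_{\alpha^*},t_{\beta^*}:V_1\to V_0$ such that: - $t_\alpha t_{\alpha^*}+t_\beta t_{\beta^*}=0$ and $t_{\alpha^*}t_\alpha+t_{\beta^*}t_\beta=0$; - all sufficiently long composites of these maps along paths vanish. Its dimension vector is $(\dim V_0)\alpha_0+(\dim V_1)\alpha_1$, and we put $\delta=\alpha_0+\alpha_1$. $S_0,S_1$ are the simple modules of dimension vectors $\alpha_0,\alpha_1$. $\Pi(\mu)$ is the variety of module structures on a fixed graded space of dimension vector $\mu$. **The varieties $I^\ell(n)$ and $I^r(n)$.** - $I^\ell(n)$ is the set of $T\in\Pi(n\delta)$ with $t_\alpha$ invertible and $t_{\beta^*}t_\alpha$ nilpotent of order exactly $n$, i.e. $(t_{\beta^*}t_\alpha)^n=0\ne(t_{\beta^*}t_\alpha)^{n-1}$.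 - $I^r(n)$ is the set of $T\in\Pi(n\delta)$ with $t_{\beta^*}$ invertible and $t_\alpha t_{\beta^*}$ nilpotent of order exactly $n$. - $I^r(0)$ consists of the zero module. *)

(* Modules over the (completed) preprojective algebra Pi of the
   Kronecker-doubled quiver 0 => 1 (arrows alpha, beta : 0 -> 1 and
   alpha*, beta* : 1 -> 0), over an arbitrary field F.
   Convention: vectors are ROW vectors, a linear map V_i -> V_j is a
   'M_(dim V_i, dim V_j) matrix acting by v |-> v *m M; hence the composite
   "first g then f" (= f o g) has matrix  g *m f.
   Subspaces are represented (mxalgebra style) by square matrices via their
   row spaces. *)
From HB Require Import structures.
From mathcomp Require Import all_boot all_algebra.
Set Implicit Arguments. Unset Strict Implicit. Unset Printing Implicit Defensive.
Import GRing.Theory.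
Local Open Scope ring_scope.

Inductive arrow := Alpha | Beta | AlphaS | BetaS.

Section PiModules.
Variable F : fieldType.

Record rep := Rep {
  d0 : nat; d1 : nat;
  ta : 'M[F]_(d0, d1);
  tb : 'M[F]_(d0, d1);
  tas : 'M[F]_(d1, d0);
  tbs : 'M[F]_(d1, d0)
}.

Definition arrow_mx (T : rep) (a : arrow) : 'M[F]_(d0 T + d1 T) :=
  match a with
  | Alpha => block_mx 0 (ta T) 0 0
  | Beta => block_mx 0 (tb T) 0 0
  | AlphaS => block_mx 0 0 (tas T) 0
  | BetaS => block_mx 0 0 (tbs T) 0
  end.

Definition path_mx (T : rep) (s : seq arrow) : 'M[F]_(d0 T + d1 T) :=
  foldr (fun a M => arrow_mx T a *m M) 1%:M s.

Definition is_pimod (T : rep) : Prop :=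
  [/\ tas T *m ta T + tbs T *m tb T = 0,
      ta T *m tas T + tb T *m tbs T = 0 &
      exists m : nat, forall s : seq arrow, (m <= size s)%N -> path_mx T s = 0].

Definition subsp (T : rep) := ('M[F]_(d0 T) * 'M[F]_(d1 T))%type.

Definition sub0 (T : rep) : subsp T := (0, 0).
Definition subT (T : rep) : subsp T := (1%:M, 1%:M).

Definition subsp_le (T : rep) (U V : subsp T) : Prop :=
  (U.1 <= V.1)%MS /\ (U.2 <= V.2)%MS.
Definition subsp_eq (T : rep) (U V : subsp T) : Prop :=
  (U.1 == V.1)%MS /\ (U.2 == V.2)%MS.

Definition submod (T : rep) (U : subsp T) : Prop :=
  [/\ (U.1 *m ta T <= U.2)%MS, (U.1 *m tb T <= U.2)%MS,
      (U.2 *m tas T <= U.1)%MS & (U.2 *m tbs T <= U.1)%MS].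

Definition simple_sub (T : rep) (U : subsp T) : Prop :=
  [/\ submod U, ~ subsp_eq U (sub0 T) &
      forall V : subsp T, submod V -> subsp_le V U ->
        subsp_eq V (sub0 T) \/ subsp_eq V U].

Definition maximal_sub (T : rep) (M : subsp T) : Prop :=
  [/\ submod M, ~ subsp_eq M (subT T) &
      forall V : subsp T, submod V -> subsp_le M V ->
        subsp_eq V M \/ subsp_eq V (subT T)].

Definition is_socle (T : rep) (W : subsp T) : Prop :=
  (forall U, simple_sub U -> subsp_le U W) /\
  exists s : seq (subsp T),
    (forall U, U \in s -> simple_sub U) /\
    subsp_eq W ((\sum_(U <- s) U.1)%MS, (\sum_(U <- s) U.2)%MS).

Definition is_radical (T : rep) (R : subsp T) : Prop :=
  (forall M, maximal_sub M -> subsp_le R M) /\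
  exists s : seq (subsp T),
    (forall M, M \in s -> maximal_sub M) /\
    subsp_eq R ((\bigcap_(M <- s) M.1)%MS, (\bigcap_(M <- s) M.2)%MS).

(* X is isomorphic to the subquotient module U/W of T (W <= U submodules):
   there is a bijective module homomorphism X -> U/W, given by
   v |-> (v *m f0, v *m f1) modulo W. *)
Definition iso_subquot (X T : rep) (U W : subsp T) : Prop :=
  submod U /\ submod W /\ subsp_le W U /\
  exists (f0 : 'M[F]_(d0 X, d0 T)) (f1 : 'M[F]_(d1 X, d1 T)),
    (f0 <= U.1)%MS /\ (f1 <= U.2)%MS /\
    (ta X *m f1 - f0 *m ta T <= W.2)%MS /\
    (tb X *m f1 - f0 *m tb T <= W.2)%MS /\
    (tas X *m f0 - f1 *m tas T <= W.1)%MS /\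
    (tbs X *m f0 - f1 *m tbs T <= W.1)%MS /\
    (forall v : 'rV[F]_(d0 X), (v *m f0 <= W.1)%MS -> v = 0) /\
    (forall v : 'rV[F]_(d1 X), (v *m f1 <= W.2)%MS -> v = 0) /\
    (U.1 <= f0 + W.1)%MS /\ (U.2 <= f1 + W.2)%MS.

Definition S0 : rep := @Rep 1 0 0 0 0 0.
Definition S1 : rep := @Rep 0 1 0 0 0 0.

Definition nil_order (m : nat) (M : 'M[F]_m) (k : nat) : Prop :=
  M ^+ k = 0 /\ M ^+ k.-1 <> 0.

Definition repn (n : nat) (A B As Bs : 'M[F]_n) : rep := @Rep n n A B As Bs.

Definition in_Il (n : nat) (A B As Bs : 'M[F]_n) : Prop :=
  [/\ is_pimod (repn A B As Bs), A \in unitmx & nil_order (A *m Bs) n].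

Definition in_Ir (n : nat) (A B As Bs : 'M[F]_n) : Prop :=
  match n with
  | 0 => True
  | _.+1 => [/\ is_pimod (repn A B As Bs), Bs \in unitmx & nil_order (Bs *m A) n]
  end.

End PiModules.

Arguments is_socle {F} T W.
Arguments is_radical {F} T R.
Arguments iso_subquot {F} X T U W.

(* Since A is invertible, the preprojective relations express As through Bs:
   ker Bs is killed by As and im As <= im Bs; and the nilpotency order forces
   rank Bs = n - 1.  Then:
   - socle: a submodule missing (0, ker Bs) is stable under the nilpotent
     Bs A in degree 1 and vanishes; the line (0, ker Bs) is simple, so it is
     the socle, isomorphic to S_1;
   - radical: dually a submodule M with M0 + im Bs = V0 is all of T, and the
     hyperplane (im Bs, V1) is maximal, so it is the radical, with top S_0;
   - rad/soc: on a basis f0 of im Bs and a basis f1 of a complement of ker Bs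
     the maps of T induce A', B', As', Bs' with rad/soc isomorphic to
     (A', B', As', Bs').  Any representation isomorphic to a subquotient of a
     Pi-module is a Pi-module (relations and paths transfer along the
     intertwining map, which is injective modulo the socle); Bs' is
     invertible as f1 misses ker Bs; and (Bs' A')^j = 0 iff (A Bs)^(j+1) = 0,
     so Bs' A' is nilpotent of order n - 1, i.e. rad/soc lies in I^r(n - 1). *)

From HB Require Import structures.
From mathcomp Require Import all_boot all_algebra.
Set Implicit Arguments. Unset Strict Implicit. Unset Printing Implicit Defensive.
Import GRing.Theory.
Local Open Scope ring_scope.

Section LinearAlgebra.
Variable F : fieldType.

Lemma powS_sub n (N : 'M[F]_n) i : (N ^+ i.+1 <= N ^+ i)%MS.
Proof. by rewrite exprS -mulmxE submxMl. Qed.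

Lemma pow_rank_stable n (N : 'M[F]_n) i k :
  \rank (N ^+ i.+1) = \rank (N ^+ i) -> N ^+ k = 0 -> N ^+ i = 0.
Proof.
move=> eq_rk Nk0.
have stable : (N ^+ i.+1 :=: N ^+ i)%MS.
  by apply/eqmxP; rewrite -(mxrank_leqif_eq (powS_sub N i)) eq_rk.
have stable_j j : (N ^+ (i + j) :=: N ^+ i)%MS.
  elim: j => [|j IHj]; first by rewrite addn0.
  rewrite addnS -addSn exprD -mulmxE.
  by apply: eqmx_trans (eqmxMr _ stable) _; rewrite mulmxE -exprD.
by apply/eqP; rewrite -submx0 -(stable_j k) exprD Nk0 mulr0 submx0.
Qed.

Lemma pow_rank_lower n (N : 'M[F]_n) k p :
  N ^+ p = 0 -> N ^+ k != 0 -> forall j, (j <= k)%N -> (j < \rank (N ^+ (k - j)))%N.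
Proof.
move=> Np0 Nk_neq0; elim=> [|j IHj] le_jk; first by rewrite subn0 lt0n mxrank_eq0.
have kj : (k - j = (k - j.+1).+1)%N by rewrite subnS prednK // subn_gt0.
apply: leq_ltn_trans (IHj (ltnW le_jk)) _.
rewrite kj ltn_neqAle mxrankS ?powS_sub // andbT.
apply/eqP => /pow_rank_stable/(_ Np0) N0; move: Nk_neq0.
by rewrite -(subnK le_jk) exprD N0 mul0r eqxx.
Qed.

Lemma nil_order_rank n (N : 'M[F]_n) :
  (0 < n)%N -> nil_order N n -> \rank N = n.-1.
Proof.
move=> n_gt0 [Nn0 /eqP Nn1_neq0]; apply/eqP; rewrite eqn_leq; apply/andP; split.
  rewrite -ltnS prednK // ltn_neqAle rank_leq_row andbT; apply/eqP => rk_full.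
  have /pow_rank_stable/(_ Nn0) : \rank (N ^+ 1) = \rank (N ^+ 0).
    by rewrite expr1 expr0 rk_full mxrank1.
  by rewrite expr0 => /eqP; rewrite -mxrank_eq0 mxrank1 eqn0Ngt n_gt0.
case: n n_gt0 N Nn0 Nn1_neq0 => [|[|m]] // _ N Nn0 Nn1_neq0.
by have := pow_rank_lower Nn0 Nn1_neq0 (leqnSn m); rewrite subSnn expr1.
Qed.

Lemma stable_nilpotent p n (U : 'M[F]_(p, n)) (N : 'M[F]_n) k :
  (U <= U *m N)%MS -> N ^+ k = 0 -> U = 0.
Proof.
move=> U_UN Nk0; suff U_UNj j : (U <= U *m N ^+ j)%MS.
  by apply/eqP; rewrite -submx0 (submx_trans (U_UNj k)) // Nk0 mulmx0 sub0mx.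
elim: j => [|j IHj]; first by rewrite expr0 mulmx1.
by rewrite exprSr -mulmxE mulmxA; apply: submx_trans U_UN (submxMr _ IHj).
Qed.

Lemma cover_nilpotent p n (U : 'M[F]_(p, n)) (N : 'M[F]_n) k :
  (1%:M <= U + N)%MS -> (U *m N <= U)%MS -> N ^+ k = 0 -> (1%:M <= U)%MS.
Proof.
move=> full UN_U Nk0; suff full_j j : (1%:M <= U + N ^+ j)%MS.
  by have := full_j k; rewrite Nk0 addsmx0.
elim: j => [|j IHj]; first by rewrite expr0 addsmxSr.
apply: submx_trans full _; rewrite addsmx_sub addsmxSl /=.
have := submxMr N IHj; rewrite mul1mx addsmxMr => /submx_trans; apply.
by rewrite exprSr -mulmxE addsmxS.
Qed.

Lemma mulmx_pow_swap n (X Y : 'M[F]_n) k : (X *m Y) ^+ k *m X = X *m (Y *m X) ^+ k.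
Proof.
elim: k => [|k IHk]; first by rewrite !expr0 mul1mx mulmx1.
by rewrite !exprS -!mulmxE -!mulmxA IHk !mulmxA.
Qed.

Lemma intertwine_mul p q r (X1 X2 : 'M[F]_p) (Y1 Y2 : 'M[F]_q)
    (f : 'M[F]_(p, q)) (K : 'M[F]_(r, q)) :
  (X1 *m f - f *m Y1 <= K)%MS -> (X2 *m f - f *m Y2 <= K)%MS -> (K *m Y2 <= K)%MS ->
  (X1 *m X2 *m f - f *m (Y1 *m Y2) <= K)%MS.
Proof.
move=> int1 int2 KY2_K.
have -> : X1 *m X2 *m f - f *m (Y1 *m Y2)
    = X1 *m (X2 *m f - f *m Y2) + (X1 *m f - f *m Y1) *m Y2.
  by rewrite mulmxBr mulmxBl !mulmxA addrA subrK.
by rewrite addmx_sub ?(mulmx_sub _ int2) // (submx_trans (submxMr Y2 int1)).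
Qed.

Lemma intertwine_add p q r (X1 X2 : 'M[F]_p) (Y1 Y2 : 'M[F]_q)
    (f : 'M[F]_(p, q)) (K : 'M[F]_(r, q)) :
  (X1 *m f - f *m Y1 <= K)%MS -> (X2 *m f - f *m Y2 <= K)%MS ->
  ((X1 + X2) *m f - f *m (Y1 + Y2) <= K)%MS.
Proof. by move=> int1 int2; rewrite mulmxDl mulmxDr opprD addrACA addmx_sub. Qed.

Lemma intertwine_pow p q r (X : 'M[F]_p) (Y : 'M[F]_q) (f : 'M[F]_(p, q))
    (K : 'M[F]_(r, q)) :
  (X *m f - f *m Y <= K)%MS -> (K *m Y <= K)%MS ->
  forall j, (X ^+ j *m f - f *m Y ^+ j <= K)%MS.
Proof.
move=> intXY KY_K; elim=> [|j IHj]; first by rewrite !expr0 mul1mx mulmx1 subrr sub0mx.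
by rewrite !exprSr -!mulmxE; apply: intertwine_mul.
Qed.

Lemma lift_mod p q r s (f : 'M[F]_(p, q)) (K : 'M[F]_(r, q)) (Y : 'M[F]_(s, q)) :
  (1%:M <= f + K)%MS -> exists C, (C *m f - Y <= K)%MS.
Proof.
move=> full; have /sub_addsmxP[u ->] := submx_trans (submx1 Y) full.
by exists u.1; rewrite opprD addNKr -mulNmx submxMl.
Qed.

Lemma row_mx_sub_diag p r1 r2 m1 m2 (a : 'M[F]_(p, m1)) (b : 'M[F]_(p, m2))
    (W1 : 'M[F]_(r1, m1)) (W2 : 'M[F]_(r2, m2)) :
  (row_mx a b <= block_mx W1 0 0 W2)%MS = (a <= W1)%MS && (b <= W2)%MS.
Proof.
apply/idP/andP => [/submxP[D] | [/submxP[Da ->] /submxP[Db ->]]].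
  rewrite -[D]hsubmxK block_mxEv mul_row_col !mul_mx_row !mulmx0 add_row_mx.
  by rewrite addr0 add0r => /eq_row_mx[-> ->]; rewrite !submxMl.
rewrite -[Da *m W1]addr0 -[Db *m W2]add0r -(mulmx0 _ Db) -(mulmx0 _ Da).
by rewrite -mul_row_block submxMl.
Qed.

Lemma block_mx_sub_diag p1 p2 r1 r2 m1 m2 (a : 'M[F]_(p1, m1)) (b : 'M[F]_(p1, m2))
    (c : 'M[F]_(p2, m1)) (d : 'M[F]_(p2, m2)) (W1 : 'M[F]_(r1, m1)) (W2 : 'M[F]_(r2, m2)) :
  (block_mx a b c d <= block_mx W1 0 0 W2)%MS =
  [&& (a <= W1)%MS, (b <= W2)%MS, (c <= W1)%MS & (d <= W2)%MS].
Proof. by rewrite block_mxEv col_mx_sub !row_mx_sub_diag !andbA. Qed.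

Lemma row_basis m n r (M : 'M[F]_(m, n)) :
  \rank M = r -> exists f : 'M[F]_(r, n), row_free f /\ (f :=: M)%MS.
Proof. by move<-; exists (row_base M); split; [exact: row_base_free | exact: eq_row_base]. Qed.

End LinearAlgebra.

Section Subquotients.
Variable F : fieldType.
Implicit Types X T : rep F.

Definition tot_sub T (U : subsp T) : 'M[F]_(d0 T + d1 T) := block_mx U.1 0 0 U.2.

Lemma submod_tot T (U : subsp T) :
  submod U -> forall a, (tot_sub U *m arrow_mx T a <= tot_sub U)%MS.
Proof.
rewrite /tot_sub => -[sA sB sAs sBs] [] /=;
  rewrite mulmx_block !mulmx0 !mul0mx ?addr0 ?add0r block_mx_sub_diag !sub0mx;
  by rewrite ?sA ?sB ?sAs ?sBs.
Qed.

Lemma path_intertwine X T p (Phi : 'M[F]_(d0 X + d1 X, d0 T + d1 T))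
    (K : 'M[F]_(p, d0 T + d1 T)) :
  (forall a, (arrow_mx X a *m Phi - Phi *m arrow_mx T a <= K)%MS) ->
  (forall a, (K *m arrow_mx T a <= K)%MS) ->
  forall s, (path_mx X s *m Phi - Phi *m path_mx T s <= K)%MS.
Proof.
move=> int_arrow K_stable.
have K_path s : (K *m path_mx T s <= K)%MS.
  elim: s => [|a s IHs] /=; first by rewrite mulmx1.
  by rewrite mulmxA (submx_trans (submxMr _ (K_stable a))).
elim=> [|a s IHs] /=; first by rewrite mul1mx mulmx1 subrr sub0mx.
exact: intertwine_mul.
Qed.

(* The two preprojective relations are the value of one element of the path
   algebra, the sum of the four paths of length two. *)
Definition relation_mx T : 'M[F]_(d0 T + d1 T) :=
  path_mx T [:: Alpha; AlphaS] + path_mx T [:: Beta; BetaS]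
  + path_mx T [:: AlphaS; Alpha] + path_mx T [:: BetaS; Beta].

Lemma relation_mxE T :
  relation_mx T = block_mx (ta T *m tas T + tb T *m tbs T) 0 0 (tas T *m ta T + tbs T *m tb T).
Proof.
rewrite /relation_mx /path_mx /= !mulmx1 !mulmx_block !mulmx0 !mul0mx !addr0 !add0r.
by rewrite !add_block_mx !addr0 !add0r.
Qed.

Lemma iso_subquot_total X T (U W : subsp T) :
  iso_subquot X T U W ->
  exists Phi : 'M[F]_(d0 X + d1 X, d0 T + d1 T),
    (forall a, (arrow_mx X a *m Phi - Phi *m arrow_mx T a <= tot_sub W)%MS) /\
    (forall p (P : 'M[F]_(p, d0 X + d1 X)), (P *m Phi <= tot_sub W)%MS -> P = 0).
Proof.
move=> [_ [_ [_ [f0 [f1 [_ [_ [iA [iB [iAs [iBs [inj0 [inj1 _]]]]]]]]]]]]].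
exists (block_mx f0 0 0 f1); split.
  rewrite /tot_sub => -[] /=; rewrite !mulmx_block !mulmx0 !mul0mx ?addr0 ?add0r;
  by rewrite opp_block_mx add_block_mx !subr0 ?sub0r ?oppr0 block_mx_sub_diag !sub0mx
    ?eqmx_opp ?iA ?iB ?iAs ?iBs.
move=> p P PPhi; apply/row_matrixP => i; rewrite row0.
have : (row i P *m block_mx f0 0 0 f1 <= tot_sub W)%MS.
  by rewrite -row_mul (submx_trans (row_sub _ _) PPhi).
rewrite -[row i P]hsubmxK mul_row_block !mulmx0 addr0 add0r /tot_sub row_mx_sub_diag.
by case/andP=> /inj0 -> /inj1 ->; rewrite row_mx0.
Qed.

Lemma iso_subquot_pimod X T (U W : subsp T) :
  is_pimod T -> iso_subquot X T U W -> is_pimod X.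
Proof.
move=> [rel1 rel0 [m pathT0]] isoX.
have sW : submod W by case: isoX => _ [].
have [Phi [int_arrow inj]] := iso_subquot_total isoX.
have int_path := path_intertwine int_arrow (submod_tot sW).
have rel_T : relation_mx T = 0 by rewrite relation_mxE rel0 rel1 block_mx0.
have rel_X : relation_mx X = 0.
  by apply: inj; rewrite -[_ *m Phi]subr0 -(mulmx0 _ Phi) -rel_T !intertwine_add.
have := relation_mxE X; rewrite rel_X -block_mx0 => /eq_block_mx[rel0X _ _ rel1X].
split=> //; exists m => s le_ms; apply: inj.
by rewrite -[_ *m Phi]subr0 -(mulmx0 _ Phi) -(pathT0 s le_ms).
Qed.

Lemma submod_eq T (U U' : subsp T) : subsp_eq U U' -> submod U' -> submod U.
Proof.
case: U U' => U1 U2 [U1' U2'] [/eqmxP /= e1 /eqmxP /= e2] [/= s1 s2 s3 s4].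
by split; rewrite /= ?(eqmxMr _ e1) ?(eqmxMr _ e2) ?e1 ?e2.
Qed.

Lemma subsp_eq_refl T (U : subsp T) : subsp_eq U U.
Proof. by split; rewrite submx_refl. Qed.

Lemma iso_subquot_eq X T (U U' W W' : subsp T) :
  subsp_eq U U' -> subsp_eq W W' -> iso_subquot X T U' W' -> iso_subquot X T U W.
Proof.
move=> eU eW [sU' [sW' [[W_U1 W_U2] [f0 [f1 [f0U [f1U [iA [iB [iAs [iBs
  [inj0 [inj1 [sur0 sur1]]]]]]]]]]]]]].
have sU := submod_eq eU sU'; have sW := submod_eq eW sW'.
case: U U' eU sU sU' W_U1 W_U2 f0U f1U sur0 sur1
  => U1 U2 [U1' U2'] [/eqmxP /= eU1 /eqmxP /= eU2] sU _ /= W_U1 W_U2 f0U f1U sur0 sur1.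
case: W W' eW sW sW' W_U1 W_U2 iA iB iAs iBs inj0 inj1 sur0 sur1
  => W1 W2 [W1' W2'] [/eqmxP /= eW1 /eqmxP /= eW2] sW _ /= W_U1 W_U2 iA iB iAs iBs
     inj0 inj1 sur0 sur1.
do 2!split=> //; split; first by split; rewrite /= ?eU1 ?eU2 ?eW1 ?eW2.
exists f0, f1; rewrite /= ?eU1 ?eU2 ?eW1 ?eW2; do !split=> //.
- by move=> v; rewrite eW1; apply: inj0.
- by move=> v; rewrite eW2; apply: inj1.
- by rewrite (adds_eqmx (eqmx_refl f0) eW1).
- by rewrite (adds_eqmx (eqmx_refl f1) eW2).
Qed.

End Subquotients.

Lemma in_IrP (F : fieldType) m (A B As Bs : 'M[F]_m) :
  ((0 < m)%N -> [/\ is_pimod (repn A B As Bs), Bs \in unitmx & nil_order (Bs *m A) m]) ->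
  in_Ir A B As Bs.
Proof. by case: m A B As Bs => [|k] A B As Bs h //=; apply: h. Qed.

Section ModulesOfTypeIl.
Variables (F : fieldType) (n : nat) (A B As Bs : 'M[F]_n).
Hypotheses (n_gt0 : (0 < n)%N) (ilT : in_Il A B As Bs).

Local Notation T := (repn A B As Bs).

Let piT : is_pimod T. Proof. by case: ilT. Qed.
Let unitA : A \in unitmx. Proof. by case: ilT. Qed.
Let nilABs : nil_order (A *m Bs) n. Proof. by case: ilT. Qed.
Let rel1 : As *m A + Bs *m B = 0. Proof. by case: piT. Qed.
Let rel0 : A *m As + B *m Bs = 0. Proof. by case: piT. Qed.

Local Notation K := (kermx Bs).
Local Notation soc := ((0, kermx Bs) : subsp T).
Local Notation rad := ((Bs, 1%:M) : subsp T).

(* As A is invertible, the relations give As = - Bs B A^-1 = - A^-1 B Bs: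
   ker Bs is killed by As, and im As <= im Bs. *)
Lemma sub_kerBs_As p (X : 'M[F]_(p, n)) : (X <= K)%MS -> X *m As = 0.
Proof.
have -> : As = - (Bs *m B) *m invmx A.
  by rewrite -(mulmxK unitA As); congr (_ *m _); apply/eqP; rewrite -addr_eq0 rel1.
by rewrite sub_kermx => /eqP XBs0; rewrite mulNmx mulmxN !mulmxA XBs0 !mul0mx oppr0.
Qed.

Lemma As_sub_Bs : (As <= Bs)%MS.
Proof.
have -> : As = invmx A *m (- (B *m Bs)).
  by rewrite -[LHS](mulKmx unitA As); congr (_ *m _); apply/eqP; rewrite -addr_eq0 rel0.
by rewrite mulmxN -mulNmx mulmxA submxMl.
Qed.

(* A Bs is nilpotent of order n and A is invertible, so ker Bs is a line. *)
Lemma rank_Bs : \rank Bs = n.-1.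
Proof. by rewrite -(nil_order_rank n_gt0 nilABs) eqmxMfull ?row_full_unit. Qed.

Lemma rank_kerBs : \rank K = 1%N.
Proof. by rewrite mxrank_ker rank_Bs -subn1 subKn. Qed.


(* Bs A is conjugate to A Bs, hence nilpotent as well. *)
Lemma nil_BsA : (Bs *m A) ^+ n = 0.
Proof.
by rewrite -(mulKmx unitA ((Bs *m A) ^+ n)) -mulmx_pow_swap nilABs.1 mul0mx mulmx0.
Qed.

Lemma soc_submod : submod soc.
Proof.
by split; rewrite /= ?mul0mx ?sub0mx // ?mulmx_ker ?sub_kerBs_As ?sub0mx.
Qed.

(* Every nonzero submodule U of T meets (0, ker Bs): if U1 misses ker Bs,
   then U1 Bs A has the rank of U1 and lies in U1, hence equals U1, so
   U1 = 0 as Bs A is nilpotent; then U0 A <= U1 = 0 gives U0 = 0. *)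
Lemma submod_meets_soc (U : subsp T) :
  submod U -> (U.2 :&: K <= (0 : 'M_n))%MS -> subsp_eq U (sub0 T).
Proof.
case: U => U0 U1 [/= sA _ _ sBs] U1_K.
have U1_0 : U1 = 0.
  apply: (stable_nilpotent _ nil_BsA).
  have sub : (U1 *m (Bs *m A) <= U1)%MS by rewrite mulmxA (submx_trans (submxMr A sBs)).
  rewrite -(mxrank_leqif_sup sub) mulmxA mxrankMfree ?row_free_unit //.
  rewrite -[X in _ == X](mxrank_mul_ker U1 Bs).
  suff -> : \rank (U1 :&: K) = 0%N by rewrite addn0.
  by apply/eqP; rewrite mxrank_eq0 -submx0.
have U0_0 : U0 = 0.
  have freeA : row_free A by rewrite row_free_unit.
  by apply/eqP; rewrite -(mulmx_free_eq0 _ freeA) -submx0 -U1_0.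
by rewrite /subsp_eq /= U0_0 U1_0; split; rewrite sub0mx.
Qed.

(* So a simple submodule U equals its intersection with (0, ker Bs). *)
Lemma simple_sub_soc (U : subsp T) : simple_sub U -> subsp_le U soc.
Proof.
case=> sU nz minU; set V : subsp T := (0, (U.2 :&: K)%MS).
have sV : submod V.
  split; rewrite /= ?mul0mx ?sub0mx // ?sub_kerBs_As ?capmxSr ?sub0mx //.
  by rewrite submx0 -sub_kermx capmxSr.
have V_U : subsp_le V U by split; rewrite /= ?sub0mx ?capmxSl.
case: (minU V sV V_U) => [[_ /andP[V0 _]] | [/andP[_ U0] /andP[_ U1]]].
  by case: nz; apply: submod_meets_soc.
by split => //; apply: submx_trans U1 (capmxSr _ _).
Qed.

(* (0, ker Bs) is simple, because ker Bs is one-dimensional. *)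
Lemma soc_simple : simple_sub soc.
Proof.
split; first exact: soc_submod.
  by move=> [_ /= /andP[]]; rewrite submx0 => /eqP K0 _; move: rank_kerBs; rewrite K0 mxrank0.
move=> [V0 V1] _ [/= V0_0 V1_K].
have := mxrank_leqif_eq V1_K; rewrite rank_kerBs /subsp_eq /=.
case: (\rank V1 =P 0%N) => [/eqP | rk_V1 le_V1].
  by rewrite mxrank_eq0 => /eqP -> _; left; rewrite V0_0 !sub0mx.
right; split; first by rewrite V0_0 sub0mx.
by rewrite -le_V1; case: (\rank V1) rk_V1 le_V1.1 => [|[|]].
Qed.

Lemma socle_exists : is_socle T soc.
Proof.
split; first by move=> U /simple_sub_soc.
exists [:: soc]; split; first by move=> U; rewrite inE => /eqP ->; apply: soc_simple.
by rewrite !big_seq1; split; rewrite /= submx_refl.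
Qed.

Lemma socle_unique (W : subsp T) : is_socle T W -> subsp_eq W soc.
Proof.
move=> [all_simple [s [s_simple [/andP[W0 _] /andP[W1 _]]]]].
have [soc_W0 soc_W1] := all_simple _ soc_simple.
have sum_le (f : subsp T -> 'M[F]_n) (Y : 'M[F]_n) :
    (forall U, simple_sub U -> (f U <= Y)%MS) -> (\sum_(U <- s) f U <= Y)%MS.
  move=> f_Y; rewrite big_seq; apply: (big_ind (fun M => M <= Y)%MS) => //.
  - exact: sub0mx.
  - by move=> M1 M2 M1_Y M2_Y; rewrite addsmx_sub M1_Y.
  - by move=> U /s_simple /f_Y.
split; apply/andP; split=> //.
  by apply: submx_trans W0 (sum_le _ _ (fun U hU => (simple_sub_soc hU).1)).
by apply: submx_trans W1 (sum_le _ _ (fun U hU => (simple_sub_soc hU).2)).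
Qed.

(* The socle is isomorphic to S_1, via a basis vector of ker Bs. *)
Lemma soc_iso_S1 : iso_subquot (S1 F) T soc (sub0 T).
Proof.
have [v [free_v v_K]] := row_basis rank_kerBs.
split; first exact: soc_submod.
split; first by split; rewrite /= mul0mx sub0mx.
split; first by split; rewrite /= sub0mx.
have v_sub : (v <= K)%MS by rewrite v_K.
have vBs0 : v *m Bs = 0 by apply/eqP; rewrite -sub_kermx.
exists 0, v; rewrite /= (sub_kerBs_As v_sub) vBs0 !mul0mx !subr0 !sub0mx addsmx0 v_sub.
do !split=> //.
- by move=> u _; apply: thinmx0.
- by move=> u; rewrite submx0 (mulmx_free_eq0 _ free_v) => /eqP.
- by rewrite v_K.
Qed.

(* im Bs = im (A^-1 A Bs) <= im (A Bs) *)
Lemma Bs_sub_ABs : (Bs <= A *m Bs)%MS.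
Proof. by rewrite -{1}(mulKmx unitA Bs) submxMl. Qed.

(* (im Bs, V1) is a submodule since im As <= im Bs. *)
Lemma rad_submod : submod rad.
Proof. by split; rewrite /= ?submx1 ?mul1mx ?submx_refl ?As_sub_Bs. Qed.

(* Dually, a submodule M of T with M0 + im Bs = V0 is all of T: then
   M0 + im (A Bs) = V0 with M0 stable under A Bs, which is nilpotent, so
   M0 = V0, and M1 >= M0 A = V1. *)
Lemma submod_covers (M : subsp T) :
  submod M -> (1%:M <= M.1 + Bs)%MS -> subsp_eq M (subT T).
Proof.
case: M => M0 M1 [/= sA _ _ sBs] cover.
have M0_full : (1%:M <= M0)%MS.
  apply: (cover_nilpotent _ _ nilABs.1).
    by apply: submx_trans cover _; rewrite addsmxS ?Bs_sub_ABs.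
  by rewrite mulmxA (submx_trans (submxMr Bs sA)).
have M1_full : (1%:M <= M1)%MS.
  have A_full : (1%:M <= A)%MS by rewrite sub1mx row_full_unit.
  by apply: submx_trans A_full (submx_trans _ sA); rewrite -{1}(mul1mx A) submxMr.
by split; rewrite /= ?M0_full ?M1_full !submx1.
Qed.

(* So a maximal submodule M equals its sum with (im Bs, V1). *)
Lemma maximal_sub_rad (M : subsp T) : maximal_sub M -> subsp_le rad M.
Proof.
case=> sM proper maxM; set V : subsp T := ((M.1 + Bs)%MS, 1%:M).
have sV : submod V.
  split; rewrite /= ?submx1 ?mul1mx ?addsmxSr //.
  exact: submx_trans As_sub_Bs (addsmxSr _ _).
have M_V : subsp_le M V by split; rewrite /= ?submx1 ?addsmxSl.
case: (maxM V sV M_V) => [[/andP[V0 _] /andP[V1 _]] | [/andP[_ cover] _]].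
  by split=> //; apply: submx_trans V0; rewrite addsmxSr.
by case: proper; apply: submod_covers.
Qed.

(* (im Bs, V1) is maximal, because im Bs is a hyperplane. *)
Lemma rad_maximal : maximal_sub rad.
Proof.
split; first exact: rad_submod.
  move=> [/andP[_]]; rewrite sub1mx /row_full rank_Bs => /eqP n_eq _.
  by move: (ltn_predL n); rewrite n_gt0 n_eq ltnn.
move=> [V0 V1] _ [/= Bs_V0 V1_full]; rewrite /subsp_eq /= V1_full !submx1.
have := mxrank_leqif_sup Bs_V0; rewrite rank_Bs.
case: (eqVneq (\rank V0) n) => [V0_full | V0_not_full] le_V0.
  by right; rewrite sub1mx /row_full V0_full eqxx.
left; split=> //; rewrite Bs_V0 andbT -le_V0 eqn_leq le_V0.1 /=.
by rewrite -ltnS prednK // ltn_neqAle V0_not_full rank_leq_col.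
Qed.

Lemma radical_exists : is_radical T rad.
Proof.
split; first by move=> M /maximal_sub_rad.
exists [:: rad]; split; first by move=> M; rewrite inE => /eqP ->; apply: rad_maximal.
by rewrite !big_seq1; split; rewrite /= submx_refl.
Qed.

Lemma radical_unique (R : subsp T) : is_radical T R -> subsp_eq R rad.
Proof.
move=> [all_maximal [s [s_maximal [/andP[_ R0] /andP[_ R1]]]]].
have [R_rad0 R_rad1] := all_maximal _ rad_maximal.
have cap_ge (f : subsp T -> 'M[F]_n) (Y : 'M[F]_n) :
    (forall M, maximal_sub M -> (Y <= f M)%MS) -> (Y <= \bigcap_(M <- s) f M)%MS.
  move=> Y_f; rewrite big_seq; apply: (big_ind (fun M => Y <= M)%MS) => //.
  - exact: submx1.
  - by move=> M1 M2 Y_M1 Y_M2; rewrite sub_capmx Y_M1.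
  - by move=> M /s_maximal /Y_f.
split; apply/andP; split=> //.
  by apply: submx_trans (cap_ge _ _ (fun M hM => (maximal_sub_rad hM).1)) R0.
by apply: submx_trans (cap_ge _ _ (fun M hM => (maximal_sub_rad hM).2)) R1.
Qed.

(* The top T / rad T is isomorphic to S_0, via a vector of V0 complementing
   im Bs. *)
Lemma top_iso_S0 : iso_subquot (S0 F) T (subT T) rad.
Proof.
have rank_compl : \rank (Bs^C)%MS = 1%N by rewrite mxrank_compl rank_Bs -subn1 subKn.
have [v [free_v v_compl]] := row_basis rank_compl.
split; first by split; rewrite /= submx1.
split; first exact: rad_submod.
split; first by split; rewrite /= submx1.
exists v, 0; rewrite /= !submx1 !mul0mx subrr sub0mx addsmxSr.
do !split=> //.
- move=> u u_Bs; apply/eqP; rewrite -(mulmx_free_eq0 _ free_v) -submx0 -(capmx_compl Bs).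
  by rewrite sub_capmx u_Bs -v_compl submxMl.
- by move=> u _; apply: thinmx0.
- rewrite sub1mx /row_full (adds_eqmx v_compl (eqmx_refl Bs)) addsmxC.
  exact: addsmx_compl_full.
Qed.

(* (Bs A)^j Bs = Bs (A Bs)^j vanishes exactly when (A Bs)^(j+1) does. *)
Lemma pow_BsA_Bs_eq0 j : (Bs *m A) ^+ j *m Bs = 0 <-> (A *m Bs) ^+ j.+1 = 0.
Proof.
rewrite mulmx_pow_swap exprS -mulmxE -mulmxA.
split=> [-> | ABs0]; first by rewrite mulmx0.
by rewrite -(mulKmx unitA (Bs *m _)) ABs0 mulmx0.
Qed.

(* The module rad/soc: f0 is a basis of im Bs (its degree-0 part), f1 a
   basis of a complement of ker Bs in V1 (its degree-1 part), and
   A', B', As', Bs' are the maps induced on these bases. *)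
Section RadicalModSocle.
Variables (m : nat) (f0 f1 : 'M[F]_(m, n)) (A' B' As' Bs' : 'M[F]_m).
Hypotheses (free_f0 : row_free f0) (f0_Bs : (f0 :=: Bs)%MS) (free_f1 : row_free f1)
  (f1_K : (f1 :&: K <= (0 : 'M_n))%MS) (f1_full : (1%:M <= f1 + K)%MS)
  (lift_A : (A' *m f1 - f0 *m A <= K)%MS) (lift_B : (B' *m f1 - f0 *m B <= K)%MS)
  (lift_As : As' *m f0 = f1 *m As) (lift_Bs : Bs' *m f0 = f1 *m Bs).

Lemma f1_inj p (C : 'M[F]_(p, m)) : (C *m f1 <= K)%MS -> C = 0.
Proof.
move=> Cf1_K; apply/eqP; rewrite -(mulmx_free_eq0 _ free_f1) -submx0.
by apply: submx_trans f1_K; rewrite sub_capmx Cf1_K submxMl.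
Qed.

Lemma quotient_iso : iso_subquot (repn A' B' As' Bs') T rad soc.
Proof.
split; first exact: rad_submod.
split; first exact: soc_submod.
split; first by split; rewrite /= ?sub0mx ?submx1.
exists f0, f1; rewrite /= f0_Bs submx_refl submx1 lift_As lift_Bs !subrr !sub0mx addsmx0.
do !split=> //.
- by move=> v; rewrite submx0 (mulmx_free_eq0 _ free_f0) => /eqP.
- by move=> v /f1_inj.
- by rewrite f0_Bs.
Qed.

(* Bs' is invertible: f1 Bs has full rank m since f1 misses ker Bs. *)
Lemma quotient_unit_Bs' : Bs' \in unitmx.
Proof.
rewrite -row_free_unit /row_free -(mxrankMfree _ free_f0) lift_Bs.
apply/eqP; rewrite -[RHS](eqP free_f1) -[RHS](mxrank_mul_ker f1 Bs).
suff -> : \rank (f1 :&: K) = 0%N by rewrite addn0.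
by apply/eqP; rewrite mxrank_eq0 -submx0.
Qed.

Lemma quotient_intertwine_BsA : (Bs' *m A' *m f1 - f1 *m (Bs *m A) <= K)%MS.
Proof.
have -> : Bs' *m A' *m f1 - f1 *m (Bs *m A)
    = Bs' *m (A' *m f1 - f0 *m A) + (Bs' *m f0 - f1 *m Bs) *m A.
  by rewrite mulmxBr mulmxBl !mulmxA addrA subrK.
by rewrite lift_Bs subrr mul0mx addr0 mulmx_sub.
Qed.

(* As f1 and ker Bs span V1 and (Bs A)^j Bs kills ker Bs, (Bs A)^j maps f1
   into ker Bs iff (Bs A)^j Bs = 0. *)
Lemma complement_pow_sub_ker j :
  (f1 *m (Bs *m A) ^+ j <= K)%MS <-> (Bs *m A) ^+ j *m Bs = 0.
Proof.
split=> [f1K | BsA_Bs0]; last by rewrite sub_kermx -mulmxA BsA_Bs0 mulmx0.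
have K_pow : K *m ((Bs *m A) ^+ j *m Bs) = 0.
  by rewrite mulmx_pow_swap mulmxA mulmx_ker mul0mx.
move: f1K; rewrite sub_kermx -mulmxA => /eqP f1_pow0.
case/sub_addsmxP: f1_full => u one_eq.
rewrite -[LHS]mul1mx one_eq mulmxDl -(mulmxA u.1) -(mulmxA u.2).
by rewrite f1_pow0 K_pow !mulmx0 addr0.
Qed.

Lemma quotient_pow_eq0 j : (Bs' *m A') ^+ j = 0 <-> (A *m Bs) ^+ j.+1 = 0.
Proof.
have K_BsA : (K *m (Bs *m A) <= K)%MS by rewrite mulmxA mulmx_ker mul0mx sub0mx.
have cong := intertwine_pow quotient_intertwine_BsA K_BsA j.
split=> [Bs'A'0 | /pow_BsA_Bs_eq0/complement_pow_sub_ker f1K].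
  apply/pow_BsA_Bs_eq0/complement_pow_sub_ker.
  by move: cong; rewrite Bs'A'0 mul0mx sub0r eqmx_opp.
apply: f1_inj; rewrite -(subrK (f1 *m (Bs *m A) ^+ j) (_ *m f1)).
exact: addmx_sub cong f1K.
Qed.

Lemma quotient_in_Ir : in_Ir A' B' As' Bs'.
Proof.
have m_eq : m = n.-1 by rewrite -(eqP free_f0) f0_Bs rank_Bs.
apply: in_IrP => m_gt0; split.
- exact: iso_subquot_pimod piT quotient_iso.
- exact: quotient_unit_Bs'.
- split; first by apply/quotient_pow_eq0; rewrite m_eq prednK // nilABs.1.
  by move/quotient_pow_eq0; rewrite prednK // m_eq; apply: nilABs.2.
Qed.

End RadicalModSocle.

Lemma rad_mod_soc_in_Ir :
  exists A' B' As' Bs' : 'M[F]_n.-1,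
    in_Ir A' B' As' Bs' /\ iso_subquot (repn A' B' As' Bs') T rad soc.
Proof.
have [f0 [free_f0 f0_Bs]] := row_basis rank_Bs.
have rank_compl : \rank (K^C)%MS = n.-1 by rewrite mxrank_compl rank_kerBs subn1.
have [f1 [free_f1 f1_compl]] := row_basis rank_compl.
have f1_K : (f1 :&: K <= (0 : 'M_n))%MS.
  by rewrite (cap_eqmx f1_compl (eqmx_refl _)) capmxC capmx_compl.
have f1_full : (1%:M <= f1 + K)%MS.
  by rewrite (adds_eqmx f1_compl (eqmx_refl _)) addsmxC sub1mx addsmx_compl_full.
have [A' lift_A] := lift_mod (f0 *m A) f1_full.
have [B' lift_B] := lift_mod (f0 *m B) f1_full.
have /submxP[As' lift_As] : (f1 *m As <= f0)%MS.
  by rewrite f0_Bs (submx_trans (submxMl _ _) As_sub_Bs).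
have /submxP[Bs' lift_Bs] : (f1 *m Bs <= f0)%MS by rewrite f0_Bs submxMl.
exists A', B', As', Bs'; split.
  exact: quotient_in_Ir free_f0 f0_Bs free_f1 f1_K f1_full lift_A lift_B
    (esym lift_As) (esym lift_Bs).
exact: quotient_iso free_f0 f0_Bs free_f1 f1_K f1_full lift_A lift_B
  (esym lift_As) (esym lift_Bs).
Qed.

End ModulesOfTypeIl.

Theorem mainTheorem12 (F : fieldType) (n : nat) (A B As Bs : 'M[F]_n) :
  (0 < n)%N -> in_Il A B As Bs ->
  (exists W, is_socle (repn A B As Bs) W) /\
  (exists R, is_radical (repn A B As Bs) R) /\
  (* socle(T) = S_1 *)
  (forall W, is_socle (repn A B As Bs) W ->
     iso_subquot (S1 F) (repn A B As Bs) W (sub0 _)) /\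
  (* top(T) = T / rad T = S_0 *)
  (forall R, is_radical (repn A B As Bs) R ->
     iso_subquot (S0 F) (repn A B As Bs) (subT _) R) /\
  (* ker(T/W -> S_0) = rad(T)/W is isomorphic to a point of I^r(n-1) *)
  (forall W R, is_socle (repn A B As Bs) W -> is_radical (repn A B As Bs) R ->
     exists A' B' As' Bs' : 'M[F]_n.-1,
       in_Ir A' B' As' Bs' /\ iso_subquot (repn A' B' As' Bs') (repn A B As Bs) R W).
Proof.
move=> n_gt0 ilT.
split; first by eexists; apply: socle_exists n_gt0 ilT.
split; first by eexists; apply: radical_exists n_gt0 ilT.
split.
  move=> W /(socle_unique n_gt0 ilT) W_soc.
  exact: iso_subquot_eq W_soc (subsp_eq_refl _) (soc_iso_S1 n_gt0 ilT).
split.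
  move=> R /(radical_unique n_gt0 ilT) R_rad.
  exact: iso_subquot_eq (subsp_eq_refl _) R_rad (top_iso_S0 n_gt0 ilT).
move=> W R /(socle_unique n_gt0 ilT) W_soc /(radical_unique n_gt0 ilT) R_rad.
have [A' [B' [As' [Bs' [in_Ir' iso']]]]] := rad_mod_soc_in_Ir n_gt0 ilT.
exists A', B', As', Bs'; split=> //.
exact: iso_subquot_eq R_rad W_soc iso'.
Qed.
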